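(* Let $G$ be a finitely generated virtually nilpotent group, $A\le\operatorname{Aut}(G)$ with $|A|=n$, and let $X=(G,A)$ be the $n$-valued coset group. Then for every $z\in X$ and every $y\in X$ the growth function $\xi_y(r)$ of the $n$-valued dynamic $T_z$ at $y$ has polynomial growth, i.e. there are $C,k>0$ with $\xi_y(r)\le Cr^k$ for all $r\ge1$.
   Context: An $n$-valued group is a set $X$ with an associative $n$-valued multiplication $*:X\times X\to\operatorname{Sym}^nX$ (values are $n$-multi-sets), with unit and inverse, as in Buchstaber's definition; multiplication is extended to multi-sets elementwise with multiplicities. Coset group: for a group $G$ and finite $A\le\operatorname{Aut}(G)$ with $|A|=n$, $X=G/A$ is the set of $A$-orbits with projection $\pi$, and $\pi(g)*\pi(h)=[\pi(g\,a(h)):a\in A]$, unit $\pi(e_G)$, $\operatorname{inv}(\pi(g))=\pi(g^{-1})$. For $z\in X$ the $n$-valued dynamic $T_z$ is $T_z(y)=y*z$, iterated by $T_z^k(y)=T_z^{k-1}(y)*z$. For a multi-set $M$, $\operatorname{Set}(M)$ is the set of distinct elements of $M$. The growth function of $T_z$ at $y$ is $\xi_y(r)=|\operatorname{Set}(T_z^r(y))|$. A group is virtually nilpotent if it has a nilpotent subgroup of finite index. *)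

From Stdlib Require Import Reals List ClassicalEpsilon.
Import ListNotations.
Set Implicit Arguments.

Record Grp := {
  car :> Type;
  gmul : car -> car -> car;
  ginv : car -> car;
  gone : car;
  gmulA : forall x y z, gmul x (gmul y z) = gmul (gmul x y) z;
  gmul1 : forall x, gmul gone x = x;
  gmulV : forall x, gmul (ginv x) x = gone
}.

Section GroupDefs.
Variable G : Grp.
Local Notation "x * y" := (gmul G x y).
Local Notation e := (gone G).

Inductive gen (P : G -> Prop) : G -> Prop :=
| gen_in : forall x, P x -> gen P x
| gen_one : gen P e
| gen_mul : forall x y, gen P x -> gen P y -> gen P (x * y)
| gen_inv : forall x, gen P x -> gen P (ginv G x).

Definition finitely_generated : Prop :=
  exists S : list G, forall g, gen (fun x => In x S) g.

Definition is_subgroup (H : G -> Prop) : Prop :=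
  H e /\ (forall x y, H x -> H y -> H (x * y)) /\ (forall x, H x -> H (ginv G x)).

Definition finite_index (H : G -> Prop) : Prop :=
  exists R : list G, forall g, exists r h, In r R /\ H h /\ g = r * h.

Definition comm (x y : G) : G := ginv G x * ginv G y * x * y.

Fixpoint lcs (H : G -> Prop) (i : nat) : G -> Prop :=
  match i with
  | O => H
  | S j => gen (fun c => exists x y, H x /\ lcs H j y /\ c = comm x y)
  end.

Definition nilpotent_subgroup (H : G -> Prop) : Prop :=
  exists c, forall g, lcs H c g -> g = e.

Definition virtually_nilpotent : Prop :=
  exists H, is_subgroup H /\ finite_index H /\ nilpotent_subgroup H.

Definition is_aut (f : G -> G) : Prop :=
  (forall x y, f (x * y) = f x * f y) /\
  exists g : G -> G, (forall x, g (f x) = x) /\ (forall x, f (g x) = x).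

Definition finite_aut_subgroup (A : list (G -> G)) : Prop :=
  NoDup A /\ (forall a, In a A -> is_aut a) /\ In (fun x => x) A /\
  (forall a b, In a A -> In b A -> In (fun x => a (b x)) A) /\
  (forall a, In a A -> exists b, In b A /\ forall x, b (a x) = x).

Variable A : list (G -> G).

(* elements of X = G/A are A-orbits, seen as predicates on G *)
Definition orbit (g : G) : G -> Prop := fun x => exists a, In a A /\ x = a g.
Definition is_X (S : G -> Prop) : Prop := exists g, S = orbit g.

Definition rep (S : G -> Prop) : G :=
  epsilon (inhabits e) (fun g => S = orbit g).

(* n-valued multiplication: pi(g) * pi(h) = [pi(g a(h)) : a in A] *)
Definition xmul (S T : G -> Prop) : list (G -> Prop) :=
  map (fun a => orbit (rep S * a (rep T))) A.

Definition mmul (M : list (G -> Prop)) (z : G -> Prop) : list (G -> Prop) :=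
  flat_map (fun w => xmul w z) M.

Fixpoint Tpow (z : G -> Prop) (k : nat) (y : G -> Prop) : list (G -> Prop) :=
  match k with
  | O => [y]
  | S j => mmul (Tpow z j y) z
  end.
End GroupDefs.

Definition setcard {T : Type} (M : list T) (m : nat) : Prop :=
  exists L, NoDup L /\ (forall x, In x L <-> In x M) /\ length L = m.

From Stdlib Require Import Reals List Lia Lra Psatz ClassicalEpsilon.
Import ListNotations.

(* Since the automorphisms in A distribute over products, every value of
   T_z^r(y), for y = pi(y0) and z = pi(z0), is the orbit of c(y0) w with c in A
   and w a product of r elements of the finite set S = {a(z0) | a in A}.  So
   xi_y(r) <= |A| |B_S(r)|, where B_S(r) is the set of such products, and it
   suffices that B_S(r) grows polynomially in r.
   Let H be a nilpotent subgroup of finite index.  Schreier rewriting turns a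
   word in S into a coset representative times a word of the same length over a
   finite subset T of H.  In H, the collecting process moves the occurrences of
   each t in T to the front: a word of length m becomes t1^a1 ... td^ad (all
   a_i <= m) times a word of length O(m^(K+1)) in iterated commutators of
   elements of T, where K is the nilpotency class.  These commutators lie in
   [H, H], of smaller class, and induction on the class concludes. *)

Fixpoint bounded_vectors (m d : nat) : list (list nat) :=
  match d with
  | 0 => [[]]
  | S d => flat_map (fun i => map (cons i) (bounded_vectors m d)) (seq 0 (S m))
  end.

Lemma length_bounded_vectors m d : length (bounded_vectors m d) = S m ^ d.
Proof.
  induction d as [|d IH]; [reflexivity | cbn [bounded_vectors]].
  rewrite (flat_map_constant_length (c := length (bounded_vectors m d))).
  - now rewrite length_seq, IH.
  - intros; apply length_map.
Qed.

Lemma in_bounded_vectors m v : (forall a, In a v -> a <= m) -> In v (bounded_vectors m (length v)).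
Proof.
  induction v as [|a v IH]; intro Hv; [now left | cbn [length bounded_vectors]].
  apply in_flat_map. exists a. split.
  - apply in_seq. specialize (Hv a (or_introl eq_refl)). lia.
  - apply in_map, IH. intros b Hb. apply Hv. now right.
Qed.

Lemma In_le_list_sum a l : In a l -> a <= list_sum l.
Proof.
  induction l as [|b l IH]; simpl; [easy|].
  intros [-> | Ha]; [lia|]. specialize (IH Ha). lia.
Qed.

(* descendants K r k bounds the number of letters that a letter of level k
   becomes after r conjugations by generators, when letters of level K are
   dropped. *)
Fixpoint descendants (K r k : nat) : nat :=
  match r with
  | 0 => 1
  | S r => descendants K r k + (if S k <? K then descendants K r (S k) else 0)
  end.

Definition cost (K r : nat) {X : Type} (v : list (nat * X)) : nat :=
  list_sum (map (fun x => descendants K r (fst x)) v).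

Lemma cost_app {X : Type} K r (u v : list (nat * X)) : cost K r (u ++ v) = cost K r u + cost K r v.
Proof. unfold cost. now rewrite map_app, list_sum_app. Qed.

Lemma cost_0 {X : Type} K (v : list (nat * X)) : cost K 0 v = length v.
Proof. unfold cost. induction v as [|x v IH]; simpl; auto. Qed.

Lemma descendants_mono K r r' k : r <= r' -> descendants K r k <= descendants K r' k.
Proof. induction 1; simpl; lia. Qed.

Lemma cost_mono {X : Type} K r r' (v : list (nat * X)) : r <= r' -> cost K r v <= cost K r' v.
Proof.
  intro Hr. induction v as [|x v IH]; simpl; auto. unfold cost in *. simpl.
  pose proof (descendants_mono K _ _ (fst x) Hr). lia.
Qed.

Lemma descendants_bound K r k : descendants K r k <= S r ^ (K - k).
Proof.
  revert k. induction r as [|r IH]; intro k; simpl descendants.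
  - rewrite Nat.pow_1_l. lia.
  - destruct (S k <? K) eqn:E.
    + apply Nat.ltb_lt in E. pose proof (IH k) as H1. pose proof (IH (S k)) as H2.
      replace (K - k) with (S (K - S k)) in * by lia.
      pose proof (Nat.pow_le_mono_l (S r) (S (S r)) (K - S k) ltac:(lia)).
      simpl in *. nia.
    + rewrite Nat.add_0_r. etransitivity; [apply IH | apply Nat.pow_le_mono_l; lia].
Qed.

Lemma cost_level0_word {X : Type} K r (w : list X) :
  cost K r (map (pair 0) w) = length w * descendants K r 0.
Proof. induction w as [|g w IH]; auto. unfold cost in *. simpl. rewrite IH. lia. Qed.

Lemma succ_mul_pow_le m k : S (m * S m ^ k) <= S m ^ S k.
Proof.
  rewrite Nat.pow_succ_r'. pose proof (Nat.pow_le_mono_l 1 (S m) k ltac:(lia)).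
  rewrite Nat.pow_1_l in *. nia.
Qed.

Lemma finite_choice {X Y : Type} (l : list X) (Q : X -> Y -> Prop) :
  (forall x, In x l -> exists y, Q x y) ->
  exists ys : list Y, (forall y, In y ys -> exists x, In x l /\ Q x y) /\
    forall x, In x l -> exists y, In y ys /\ Q x y.
Proof.
  induction l as [|x l IH]; intro Hl.
  - exists []. split; intros ? [].
  - destruct IH as (ys & H1 & H2); [intros; apply Hl; now right|].
    destruct (Hl x (or_introl eq_refl)) as (y & Hy).
    exists (y :: ys). split.
    + intros y' [<- | Hy']; [exists x; split; [left|]; auto|].
      destruct (H1 y' Hy') as (x' & ? & ?). exists x'; split; [right|]; auto.
    + intros x' [<- | Hx']; [exists y; split; [left|]; auto|].
      destruct (H2 x' Hx') as (y' & ? & ?). exists y'; split; [right|]; auto.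
Qed.

Section GroupTheory.
Variable G : Grp.
Declare Scope group_scope.
Local Notation "x * y" := (gmul G x y) : group_scope.
Local Open Scope group_scope.
Local Notation e := (gone G).
Local Notation inv := (ginv G).

Lemma mulgA x y z : x * (y * z) = x * y * z. Proof. apply gmulA. Qed.
Lemma mul1g x : e * x = x. Proof. apply gmul1. Qed.
Lemma mulVg x : inv x * x = e. Proof. apply gmulV. Qed.

Lemma mulgI a x y : a * x = a * y -> x = y.
Proof. intro H. rewrite <- (mul1g x), <- (mul1g y), <- (mulVg a), <- !mulgA, H. reflexivity. Qed.

Lemma mulgV x : x * inv x = e.
Proof.
  assert (Hidem : (x * inv x) * (x * inv x) = x * inv x).
  { rewrite <- mulgA, (mulgA (inv x)), mulVg, mul1g. reflexivity. }
  assert (H : inv (x * inv x) * ((x * inv x) * (x * inv x)) = inv (x * inv x) * (x * inv x))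
    by (rewrite Hidem; reflexivity).
  rewrite mulgA, mulVg, mul1g in H. exact H.
Qed.

Lemma mulg1 x : x * e = x.
Proof. rewrite <- (mulVg x), mulgA, mulgV, mul1g. reflexivity. Qed.

Lemma invg_unique x y : x * y = e -> inv x = y.
Proof. intro H. rewrite <- (mulg1 (inv x)), <- H, mulgA, mulVg, mul1g. reflexivity. Qed.

Lemma invMg x y : inv (x * y) = inv y * inv x.
Proof. apply invg_unique. rewrite <- mulgA, (mulgA y), mulgV, mul1g, mulgV. reflexivity. Qed.

Lemma invg1 : inv e = e.
Proof. apply invg_unique, mul1g. Qed.

Lemma invg_comm x y : inv (comm G x y) = comm G y x.
Proof.
  apply invg_unique. unfold comm. rewrite <- !mulgA.
  rewrite (mulgA y (inv y)), mulgV, mul1g, (mulgA x (inv x)), mulgV, mul1g,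
    (mulgA (inv y) y), mulVg, mul1g, mulVg.
  reflexivity.
Qed.

Lemma mulg_comm_conj x t : x * comm G x t = inv t * x * t.
Proof. unfold comm. rewrite <- !mulgA, (mulgA x (inv x)), mulgV, mul1g, !mulgA. reflexivity. Qed.

Lemma gen_mono (P Q : G -> Prop) : (forall x, P x -> Q x) -> forall x, gen G P x -> gen G Q x.
Proof.
  intros HPQ x Hx.
  induction Hx; [apply gen_in | apply gen_one | apply gen_mul | apply gen_inv]; auto.
Qed.

Lemma gen_min (P H : G -> Prop) :
  is_subgroup G H -> (forall x, P x -> H x) -> forall x, gen G P x -> H x.
Proof. intros (H1 & HM & HI) HP x Hx. induction Hx; auto. Qed.

Lemma gen_is_subgroup P : is_subgroup G (gen G P).
Proof. split; [apply gen_one | split; [apply gen_mul | apply gen_inv]]. Qed.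

Section LowerCentralSeries.
Variable H : G -> Prop.
Hypothesis H_subgroup : is_subgroup G H.

Lemma lcs_comm k g t : lcs G H k g -> H t -> lcs G H (S k) (comm G g t).
Proof.
  intros Hg Ht. simpl. rewrite <- invg_comm. apply gen_inv, gen_in. exists t, g. auto.
Qed.

Lemma lcs1_sub x : lcs G H 1 x -> H x.
Proof.
  apply gen_min; auto. intros c (x' & y & Hx & Hy & ->).
  destruct H_subgroup as (_ & HM & HI). unfold comm. auto.
Qed.

Lemma lcs_succ_sub_lcs1 j x : lcs G H (S j) x -> lcs G H 1 x.
Proof.
  revert x. induction j as [|j IH]; intros x Hx; auto.
  revert Hx. apply gen_mono. intros c (a & b & Ha & Hb & ->).
  exists a, b. repeat split; auto. apply lcs1_sub, IH, Hb.
Qed.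

Lemma lcs_of_lcs1 j x : lcs G (lcs G H 1) j x -> lcs G H (S j) x.
Proof.
  revert x. induction j as [|j IH]; intros x Hx; auto.
  revert Hx. apply gen_mono. intros c (a & b & Ha & Hb & ->).
  exists a, b. repeat split; auto. apply lcs1_sub, Ha. apply IH, Hb.
Qed.

End LowerCentralSeries.

Definition gprod (w : list G) : G := fold_right (gmul G) e w.

Lemma gprod_app u w : gprod (u ++ w) = gprod u * gprod w.
Proof. induction u as [|x u IH]; simpl. - now rewrite mul1g. - now rewrite IH, mulgA. Qed.

Fixpoint gpow (t : G) (a : nat) : G :=
  match a with 0 => e | S a => t * gpow t a end.

(* A letter (k, g) is a group element g tagged with its level k: in the
   collecting process below g is a k-fold commutator of generators. *)
Local Notation letter := (nat * G)%type.

Definition word_val (v : list letter) : G := gprod (map snd v).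

Lemma word_val_app u v : word_val (u ++ v) = word_val u * word_val v.
Proof. unfold word_val. rewrite map_app. apply gprod_app. Qed.

Fixpoint commutators (T : list G) (k : nat) : list G :=
  match k with
  | 0 => T
  | S k => flat_map (fun g => map (comm G g) T) (commutators T k)
  end.

Definition is_level0 (x : letter) : bool := fst x =? 0.
Definition count_level0 (v : list letter) : nat := length (filter is_level0 v).

Fixpoint prod_pows (ts : list G) (exps : list nat) : G :=
  match ts, exps with
  | t :: ts, a :: exps => gpow t a * prod_pows ts exps
  | _, _ => e
  end.

Section Collecting.
Variables (H : G -> Prop) (K : nat) (T : list G).
Hypothesis T_sub : forall t, In t T -> H t.
Hypothesis lcs_K_trivial : forall g, lcs G H K g -> g = e.

Lemma commutators_lcs k g : In g (commutators T k) -> lcs G H k g.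
Proof.
  revert g. induction k as [|k IH]; intros g Hg; simpl in *; auto.
  apply in_flat_map in Hg as (g' & Hg' & Hin). apply in_map_iff in Hin as (t & <- & Ht).
  apply lcs_comm; auto.
Qed.

Definition well_leveled (v : list letter) : Prop :=
  forall x, In x v -> fst x < K /\ In (snd x) (commutators T (fst x)).

Lemma well_leveled_cons x v : well_leveled (x :: v) <-> well_leveled [x] /\ well_leveled v.
Proof.
  split.
  - intro Hv. split; intros y Hy; apply Hv; [destruct Hy as [<- | []]; left | right]; auto.
  - intros [Hx Hv] y [<- | Hy]; [apply Hx; left | apply Hv]; auto.
Qed.

Section CollectOne.
Variable t : G.
Hypothesis t_in : In t T.

(* x^t = x [x, t]; the commutator has one more level and is dropped at level K,
   where it is trivial. *)
Definition conj_letter (x : letter) : list letter :=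
  if S (fst x) <? K then [x; (S (fst x), comm G (snd x) t)] else [x].

Definition conj_word (v : list letter) : list letter := flat_map conj_letter v.

Fixpoint conj_word_pow (a : nat) (v : list letter) : list letter :=
  match a with 0 => v | S a => conj_word_pow a (conj_word v) end.

Lemma conj_letter_val x : well_leveled [x] -> word_val (conj_letter x) = inv t * snd x * t.
Proof.
  intro Hx. destruct (Hx x (or_introl eq_refl)) as [Hk Hu].
  unfold conj_letter, word_val. destruct (S (fst x) <? K) eqn:E; simpl.
  - now rewrite mulg1, mulg_comm_conj.
  - apply Nat.ltb_ge in E.
    assert (Hc : comm G (snd x) t = e).
    { apply lcs_K_trivial. replace K with (S (fst x)) by lia.
      apply lcs_comm; auto. apply commutators_lcs; auto. }
    now rewrite <- mulg_comm_conj, Hc, !mulg1.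
Qed.

Lemma conj_word_val v : well_leveled v -> word_val (conj_word v) = inv t * word_val v * t.
Proof.
  induction v as [|x v IH]; intro Hv.
  - unfold word_val; simpl. now rewrite mulg1, mulVg.
  - apply well_leveled_cons in Hv as [Hx Hv].
    unfold conj_word. simpl. rewrite word_val_app. fold (conj_word v).
    change (word_val (x :: v)) with (snd x * word_val v).
    rewrite IH, conj_letter_val by auto.
    rewrite <- !mulgA. do 2 f_equal. now rewrite !mulgA, mulgV, mul1g.
Qed.

Lemma conj_word_well_leveled v : well_leveled v -> well_leveled (conj_word v).
Proof.
  intros Hv y Hy. apply in_flat_map in Hy as (x & Hx & Hy).
  destruct (Hv x Hx) as [Hk Hu]. unfold conj_letter in Hy. destruct (S (fst x) <? K) eqn:E.
  - apply Nat.ltb_lt in E. destruct Hy as [<- | [<- | []]]; auto. simpl. split; auto.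
    apply in_flat_map. exists (snd x). split; auto. apply in_map, t_in.
  - destruct Hy as [<- | []]; auto.
Qed.

Lemma conj_word_pow_val a v : well_leveled v ->
  word_val (conj_word_pow a v) = inv (gpow t a) * word_val v * gpow t a.
Proof.
  revert v. induction a as [|a IH]; intros v Hv; simpl.
  - now rewrite invg1, mul1g, mulg1.
  - rewrite IH, conj_word_val, invMg, !mulgA by (auto using conj_word_well_leveled).
    reflexivity.
Qed.

Lemma conj_word_pow_well_leveled a v : well_leveled v -> well_leveled (conj_word_pow a v).
Proof.
  revert v. induction a as [|a IH]; intros v Hv; simpl; auto.
  apply IH, conj_word_well_leveled, Hv.
Qed.

Lemma cost_conj_word r v : cost K r (conj_word v) = cost K (S r) v.
Proof.
  induction v as [|x v IH]; simpl; auto. unfold conj_word in *. simpl.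
  rewrite cost_app, IH. unfold conj_letter, cost.
  destruct (S (fst x) <? K) eqn:E; simpl; rewrite ?E; lia.
Qed.

Lemma cost_conj_word_pow a r v : cost K r (conj_word_pow a v) = cost K (r + a) v.
Proof.
  revert r v. induction a as [|a IH]; intros r v; simpl.
  - now rewrite Nat.add_0_r.
  - rewrite IH, cost_conj_word. f_equal. lia.
Qed.

Lemma filter_level0_conj_word v : filter is_level0 (conj_word v) = filter is_level0 v.
Proof.
  induction v as [|x v IH]; auto. unfold conj_word. simpl.
  rewrite filter_app. fold (conj_word v). rewrite IH.
  unfold conj_letter. destruct (S (fst x) <? K); simpl; now destruct (is_level0 x).
Qed.

Lemma filter_level0_conj_word_pow a v :
  filter is_level0 (conj_word_pow a v) = filter is_level0 v.
Proof.
  revert v. induction a as [|a IH]; intro v; simpl; auto.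
  now rewrite IH, filter_level0_conj_word.
Qed.

(* collect w = (a, w') moves every occurrence of the letter (0, t) to the
   front, conjugating the letters it passes: w = t^a w' (collect_val). *)
Fixpoint collect (w : list letter) : nat * list letter :=
  match w with
  | [] => (0, [])
  | u :: w =>
      let (a, w') := collect w in
      if excluded_middle_informative (u = (0, t)) then (S a, w')
      else (a, conj_word_pow a [u] ++ w')
  end.

Lemma collect_val w a w' : well_leveled w -> collect w = (a, w') ->
  word_val w = gpow t a * word_val w'.
Proof.
  revert a w'. induction w as [|u w IH]; intros a w' Hw Hc; simpl in Hc.
  - injection Hc as <- <-. unfold word_val; simpl. now rewrite mul1g.
  - apply well_leveled_cons in Hw as [Hu Hw].
    destruct (collect w) as [a0 w0]. specialize (IH a0 w0 Hw eq_refl).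
    change (word_val (u :: w)) with (snd u * word_val w). rewrite IH.
    destruct excluded_middle_informative as [-> | Hne]; injection Hc as <- <-.
    + simpl. now rewrite mulgA.
    + rewrite word_val_app, conj_word_pow_val by auto. unfold word_val at 2; simpl.
      now rewrite mulg1, !mulgA, mulgV, mul1g.
Qed.

Lemma collect_well_leveled w a w' : well_leveled w -> collect w = (a, w') -> well_leveled w'.
Proof.
  revert a w'. induction w as [|u w IH]; intros a w' Hw Hc; simpl in Hc.
  - now injection Hc as <- <-.
  - apply well_leveled_cons in Hw as [Hu Hw].
    destruct (collect w) as [a0 w0]. specialize (IH a0 w0 Hw eq_refl).
    destruct excluded_middle_informative; injection Hc as <- <-; auto.
    intros y Hy. apply in_app_or in Hy as [Hy | Hy]; [|auto].
    now apply (conj_word_pow_well_leveled a0 [u]).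
Qed.

Lemma collect_cost w a w' r : collect w = (a, w') -> cost K r w' <= cost K (r + a) w.
Proof.
  revert a w' r. induction w as [|u w IH]; intros a w' r Hc; simpl in Hc.
  - injection Hc as <- <-. auto.
  - destruct (collect w) as [a0 w0]. specialize (IH a0 w0 r eq_refl).
    change (u :: w) with ([u] ++ w). rewrite cost_app.
    destruct excluded_middle_informative; injection Hc as <- <-.
    + pose proof (cost_mono K (r + a0) (r + S a0) w ltac:(lia)). lia.
    + rewrite cost_app, cost_conj_word_pow. lia.
Qed.

Lemma collect_count_level0 w a w' : collect w = (a, w') ->
  a + count_level0 w' = count_level0 w.
Proof.
  unfold count_level0. revert a w'.
  induction w as [|u w IH]; intros a w' Hc; simpl in Hc.
  - now injection Hc as <- <-.
  - destruct (collect w) as [a0 w0]. specialize (IH a0 w0 eq_refl).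
    destruct excluded_middle_informative as [-> | Hne]; injection Hc as <- <-.
    + simpl. lia.
    + rewrite filter_app, length_app, filter_level0_conj_word_pow. simpl.
      destruct (is_level0 u); simpl; lia.
Qed.

Lemma collect_level0 w a w' x : collect w = (a, w') -> In x w' -> fst x = 0 ->
  In x w /\ x <> (0, t).
Proof.
  revert a w'. induction w as [|u w IH]; intros a w' Hc Hx Hx0; simpl in Hc.
  - injection Hc as <- <-. destruct Hx.
  - destruct (collect w) as [a0 w0]. specialize (IH a0 w0 eq_refl).
    destruct excluded_middle_informative as [-> | Hne]; injection Hc as <- <-.
    + destruct (IH Hx Hx0). split; [right |]; auto.
    + apply in_app_or in Hx as [Hx | Hx].
      * assert (Hx' : In x (filter is_level0 [u])).
        { rewrite <- (filter_level0_conj_word_pow a0). apply filter_In. split; auto.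
          unfold is_level0. now rewrite Hx0. }
        apply filter_In in Hx' as [[<- | []] _]. split; [left |]; auto.
      * destruct (IH Hx Hx0). split; [right |]; auto.
Qed.

End CollectOne.

Fixpoint collect_all (ts : list G) (w : list letter) : list nat * list letter :=
  match ts with
  | [] => ([], w)
  | t :: ts =>
      let (a, w1) := collect t w in
      let (exps, v) := collect_all ts w1 in (a :: exps, v)
  end.

Lemma length_collect_all ts w exps v : collect_all ts w = (exps, v) -> length exps = length ts.
Proof.
  revert w exps. induction ts as [|t ts IH]; intros w exps Hc; simpl in Hc.
  - now injection Hc as <- <-.
  - destruct (collect t w) as [a w1]. destruct (collect_all ts w1) as [exps1 v1] eqn:E.
    injection Hc as <- <-. simpl. now rewrite (IH w1 exps1 E).
Qed.

Lemma collect_all_well_leveled ts w exps v : incl ts T -> well_leveled w ->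
  collect_all ts w = (exps, v) -> well_leveled v.
Proof.
  revert w exps. induction ts as [|t ts IH]; intros w exps Hts Hw Hc; simpl in Hc.
  - now injection Hc as <- <-.
  - destruct (collect t w) as [a w1] eqn:E1. destruct (collect_all ts w1) as [exps1 v1] eqn:E.
    injection Hc as <- <-. apply incl_cons_inv in Hts as [Ht Hts].
    apply (IH w1 exps1); auto. eapply collect_well_leveled; eauto.
Qed.

Lemma collect_all_val ts w exps v : incl ts T -> well_leveled w ->
  collect_all ts w = (exps, v) -> word_val w = prod_pows ts exps * word_val v.
Proof.
  revert w exps. induction ts as [|t ts IH]; intros w exps Hts Hw Hc; simpl in Hc.
  - injection Hc as <- <-. simpl. now rewrite mul1g.
  - destruct (collect t w) as [a w1] eqn:E1. destruct (collect_all ts w1) as [exps1 v1] eqn:E.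
    injection Hc as <- <-. apply incl_cons_inv in Hts as [Ht Hts].
    assert (Hw1 : well_leveled w1) by (eapply collect_well_leveled; eauto).
    simpl. rewrite (collect_val t Ht w a w1), (IH w1 exps1), mulgA; auto.
Qed.

Lemma collect_all_cost ts w exps v r : collect_all ts w = (exps, v) ->
  cost K r v <= cost K (r + list_sum exps) w.
Proof.
  revert w exps r. induction ts as [|t ts IH]; intros w exps r Hc; simpl in Hc.
  - injection Hc as <- <-. simpl. now rewrite Nat.add_0_r.
  - destruct (collect t w) as [a w1] eqn:E1. destruct (collect_all ts w1) as [exps1 v1] eqn:E.
    injection Hc as <- <-. simpl.
    replace (r + (a + list_sum exps1)) with (r + list_sum exps1 + a) by lia.
    etransitivity; [apply (IH w1 exps1 r E) | apply (collect_cost t w a w1 _ E1)].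
Qed.

Lemma collect_all_count_level0 ts w exps v : collect_all ts w = (exps, v) ->
  list_sum exps + count_level0 v = count_level0 w.
Proof.
  revert w exps. induction ts as [|t ts IH]; intros w exps Hc; simpl in Hc.
  - now injection Hc as <- <-.
  - destruct (collect t w) as [a w1] eqn:E1. destruct (collect_all ts w1) as [exps1 v1] eqn:E.
    injection Hc as <- <-. simpl.
    rewrite <- (collect_count_level0 t w a w1 E1), <- (IH w1 exps1 E). lia.
Qed.

Lemma collect_all_no_level0 ts w exps v : collect_all ts w = (exps, v) ->
  (forall x, In x w -> fst x = 0 -> In (snd x) ts) -> forall x, In x v -> fst x <> 0.
Proof.
  revert w exps. induction ts as [|t ts IH]; intros w exps Hc Hw; simpl in Hc.
  - injection Hc as <- <-. intros x Hx Hx0. exact (Hw x Hx Hx0).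
  - destruct (collect t w) as [a w1] eqn:E1. destruct (collect_all ts w1) as [exps1 v1] eqn:E.
    injection Hc as <- <-. apply (IH w1 exps1 E).
    intros x Hx Hx0. destruct (collect_level0 t w a w1 x E1 Hx Hx0) as [Hxw Hne].
    destruct (Hw x Hxw Hx0) as [Hxt | Hxts]; auto.
    destruct x as [k g]. simpl in *. subst. contradiction.
Qed.

Definition higher_commutators : list G := flat_map (commutators T) (seq 1 (pred K)).

Lemma higher_commutators_lcs1 g : is_subgroup G H -> In g higher_commutators -> lcs G H 1 g.
Proof.
  intros HH Hg. apply in_flat_map in Hg as (k & Hk & Hg). apply in_seq in Hk.
  destruct k as [|j]; [lia|]. apply (lcs_succ_sub_lcs1 H HH j), commutators_lcs, Hg.
Qed.

Lemma collected_form m w : 0 < K -> incl w T -> length w <= m ->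
  exists exps v, In exps (bounded_vectors m (length T)) /\ incl v higher_commutators /\
    (length v <= m * S m ^ K)%nat /\ gprod w = prod_pows T exps * gprod v.
Proof.
  intros K_pos Hw Hlen. set (w0 := map (pair 0) w).
  assert (Hw0 : well_leveled w0).
  { intros x Hx. apply in_map_iff in Hx as (g & <- & Hg). split; [exact K_pos | apply Hw, Hg]. }
  destruct (collect_all T w0) as [exps v] eqn:Hc.
  assert (Hsum : list_sum exps <= m).
  { pose proof (collect_all_count_level0 _ _ _ _ Hc).
    pose proof (filter_length_le is_level0 w0). unfold count_level0 in *.
    unfold w0 in *. rewrite length_map in *. lia. }
  exists exps, (map snd v). repeat split.
  - rewrite <- (length_collect_all _ _ _ _ Hc). apply in_bounded_vectors.
    intros a Ha. pose proof (In_le_list_sum a exps Ha). lia.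
  - intros g Hg. apply in_map_iff in Hg as (x & <- & Hx).
    destruct (collect_all_well_leveled T w0 exps v (incl_refl T) Hw0 Hc x Hx) as [Hk Hu].
    assert (fst x <> 0).
    { apply (collect_all_no_level0 T w0 exps v Hc); auto.
      intros y Hy _. apply in_map_iff in Hy as (g & <- & Hg). apply Hw, Hg. }
    apply in_flat_map. exists (fst x). split; auto. apply in_seq. lia.
  - rewrite length_map, <- (cost_0 K).
    rewrite (collect_all_cost T w0 exps v 0 Hc). simpl.
    rewrite (cost_mono K _ m w0 Hsum). unfold w0. rewrite cost_level0_word.
    pose proof (descendants_bound K m 0). rewrite Nat.sub_0_r in *.
    apply Nat.mul_le_mono; auto.
  - assert (Hval : word_val w0 = gprod w).
    { unfold word_val, w0. now rewrite map_map, map_id. }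
    rewrite <- Hval, (collect_all_val T w0 exps v); auto using incl_refl.
Qed.

End Collecting.

Definition poly_growth (T : list G) : Prop :=
  exists C D : nat, forall m, exists B : list G,
    (length B <= C * S m ^ D)%nat /\ forall w, incl w T -> length w <= m -> In (gprod w) B.

Lemma poly_growth_trivial T : (forall t, In t T -> t = e) -> poly_growth T.
Proof.
  intro HT. exists 1%nat, 0%nat. intro m. exists [e]. split; [simpl; lia|].
  intros w Hw _. left. induction w as [|a w IH]; simpl; auto.
  apply incl_cons_inv in Hw as [Ha Hw]. rewrite (HT a Ha), mul1g. apply IH, Hw.
Qed.

Lemma poly_growth_transfer (T U : list G) (P : nat -> list G) (L : nat -> nat) (c p b q : nat) :
  poly_growth U ->
  (forall m, length (P m) <= c * S m ^ p)%nat ->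
  (forall m, S (L m) <= b * S m ^ q)%nat ->
  (forall m w, incl w T -> length w <= m ->
     exists x u, In x (P m) /\ incl u U /\ length u <= L m /\ gprod w = x * gprod u) ->
  poly_growth T.
Proof.
  intros (C & D & HU) HP HL Hdec.
  exists (c * C * b ^ D)%nat, (p + q * D)%nat. intro m.
  destruct (HU (L m)) as (B & HB & HBcov).
  exists (flat_map (fun x => map (gmul G x) B) (P m)). split.
  - rewrite (flat_map_constant_length (c := length B)) by (intros; apply length_map).
    assert (HLD : (S (L m) ^ D <= b ^ D * S m ^ (q * D))%nat).
    { rewrite Nat.pow_mul_r, <- Nat.pow_mul_l. apply Nat.pow_le_mono_l, HL. }
    eapply Nat.le_trans.
    { apply Nat.mul_le_mono; [apply HP|].
      eapply Nat.le_trans; [apply HB | apply Nat.mul_le_mono_l, HLD]. }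
    rewrite Nat.pow_add_r. apply Nat.eq_le_incl. ring.
  - intros w Hw Hlen. destruct (Hdec m w Hw Hlen) as (x & u & Hx & Hu & Hul & ->).
    apply in_flat_map. exists x. split; auto. apply in_map, HBcov; auto.
Qed.

Theorem nilpotent_poly_growth K : forall H, is_subgroup G H -> (forall g, lcs G H K g -> g = e) ->
  forall T, (forall t, In t T -> H t) -> poly_growth T.
Proof.
  induction K as [|K IH]; intros H HH HK T HT.
  - apply poly_growth_trivial. intros t Ht. apply HK, HT, Ht.
  - assert (HU : poly_growth (higher_commutators (S K) T)).
    { apply (IH (lcs G H 1) (gen_is_subgroup _)).
      - intros g Hg. apply HK, lcs_of_lcs1; auto.
      - intros u Hu. apply (higher_commutators_lcs1 H (S K) T HT); auto. }
    apply (poly_growth_transfer T _ (fun m => map (prod_pows T) (bounded_vectors m (length T)))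
             (fun m => m * S m ^ S K)%nat 1 (length T) 1 (S (S K)) HU).
    + intro m. rewrite length_map, length_bounded_vectors. lia.
    + intro m. rewrite Nat.mul_1_l. apply succ_mul_pow_le.
    + intros m w Hw Hlen.
      destruct (collected_form H (S K) T HT HK m w ltac:(lia) Hw Hlen)
        as (exps & v & Hexps & Hv & Hvl & ->).
      exists (prod_pows T exps), v. split; [apply in_map|]; auto.
Qed.

Lemma schreier_rewrite (R gens T : list G) :
  (forall s r, In s gens -> In r R -> exists r' h, In r' R /\ In h T /\ s * r = r' * h) ->
  forall w r, incl w gens -> In r R ->
    exists r' u, In r' R /\ incl u T /\ length u = length w /\ gprod w * r = r' * gprod u.
Proof.
  intros HRS w. induction w as [|s w IH]; intros r Hw Hr.
  - exists r, []. simpl. repeat split; auto using incl_nil_l. now rewrite mul1g, mulg1.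
  - apply incl_cons_inv in Hw as [Hs Hw].
    destruct (IH r Hw Hr) as (r1 & u & Hr1 & Hu & Hl & Heq).
    destruct (HRS s r1 Hs Hr1) as (r' & h & Hr' & Hh & Hsr).
    exists r', (h :: u). repeat split; auto.
    + now apply incl_cons.
    + simpl. now rewrite Hl.
    + simpl. rewrite <- mulgA, Heq, mulgA, Hsr, mulgA. reflexivity.
Qed.

Theorem virtually_nilpotent_poly_growth :
  virtually_nilpotent G -> forall gens : list G, poly_growth gens.
Proof.
  intros (H & HH & (R & HR) & (K & HK)) gens.
  (* e = r0 h0, so w = (w r0) h0, and w r0 is rewritten as r' u by Schreier. *)
  destruct (HR e) as (r0 & h0 & Hr0 & Hh0 & He).
  destruct (finite_choice (list_prod gens R)
              (fun p h => H h /\ exists r', In r' R /\ fst p * snd p = r' * h)) as (T & HT1 & HT2).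
  { intros [s r] _. destruct (HR (s * r)) as (r' & h & Hr' & Hh & Heq). exists h; eauto. }
  assert (HT : forall t, In t (h0 :: T) -> H t).
  { intros t [<- | Ht]; auto. now destruct (HT1 t Ht) as (p & _ & Hp & _). }
  apply (poly_growth_transfer gens (h0 :: T) (fun _ => R) S (length R) 0 2 1
           (nilpotent_poly_growth K H HH HK _ HT)).
  - intro m. simpl. lia.
  - intro m. simpl. lia.
  - intros m w Hw Hlen.
    destruct (schreier_rewrite R gens (h0 :: T)) with (w := w) (r := r0)
      as (r' & u & Hr' & Hu & Hul & Heq); auto.
    { intros s r Hs Hr.
      destruct (HT2 (s, r)) as (h & Hh & _ & r' & Hr' & Hsr); [now apply in_prod|].
      exists r', h. repeat split; auto. now right. }
    exists r', (u ++ [h0]). repeat split; auto.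
    + apply incl_app; auto. intros x [<- | []]. now left.
    + rewrite length_app. simpl. lia.
    + rewrite gprod_app, mulgA, <- Heq. simpl. now rewrite mulg1, <- mulgA, <- He, mulg1.
Qed.

Lemma aut_one b : is_aut G b -> b e = e.
Proof. intros [Hb _]. apply (mulgI (b e)). now rewrite <- Hb, mul1g, mulg1. Qed.

Lemma aut_gprod b : is_aut G b -> forall w, b (gprod w) = gprod (map b w).
Proof.
  intros Hb w. induction w as [|x w IH]; simpl.
  - now apply aut_one.
  - destruct Hb as [Hm _]. now rewrite Hm, IH.
Qed.

Lemma rep_orbit A g : In (fun x => x) A -> exists b, In b A /\ rep G A (orbit G A g) = b g.
Proof.
  intro Hid. unfold rep.
  pose proof (epsilon_spec (inhabits e) (fun h => orbit G A g = orbit G A h)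
                (ex_intro _ g eq_refl)) as Hspec.
  simpl in Hspec. set (r := epsilon _ _) in *.
  assert (Hr : orbit G A r r) by (exists (fun x => x); split; auto).
  rewrite <- Hspec in Hr. destruct Hr as (b & Hb & Hr). exists b; auto.
Qed.

(* rep picks some b(g) in the orbit of g, and b(c(y0) w) = (b o c)(y0) b(w) keeps
   the shape of the values. *)
Lemma Tpow_orbit_words A z0 y0 : finite_aut_subgroup G A -> forall k W,
  In W (Tpow G A (orbit G A z0) k (orbit G A y0)) ->
  exists c w, In c A /\ incl w (map (fun a => a z0) A) /\ length w = k /\
    W = orbit G A (c y0 * gprod w).
Proof.
  intros (_ & Haut & Hid & Hcomp & _) k. induction k as [|k IH]; intros W HW.
  - destruct HW as [<- | []]. exists (fun x => x), []. repeat split; auto using incl_nil_l.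
    simpl. now rewrite mulg1.
  - simpl in HW. unfold mmul, xmul in HW.
    apply in_flat_map in HW as (W' & HW' & HW). apply in_map_iff in HW as (a & <- & Ha).
    destruct (IH W' HW') as (c & w & Hc & Hw & Hl & ->).
    destruct (rep_orbit A (c y0 * gprod w) Hid) as (b & Hb & ->).
    destruct (rep_orbit A z0 Hid) as (b' & Hb' & ->).
    exists (fun x => b (c x)), (map b w ++ [a (b' z0)]). repeat split; auto.
    + apply incl_app.
      * intros x Hx. apply in_map_iff in Hx as (x' & <- & Hx').
        apply Hw, in_map_iff in Hx' as (a' & <- & Ha').
        apply in_map_iff. exists (fun x => b (a' x)). auto.
      * intros x [<- | []]. apply in_map_iff. exists (fun x => a (b' x)). auto.
    + rewrite length_app, length_map. simpl. lia.
    + f_equal. destruct (Haut b Hb) as [Hm _].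
      rewrite Hm, aut_gprod, gprod_app by auto. simpl. now rewrite mulg1, mulgA.
Qed.

End GroupTheory.

Open Scope R_scope.

Lemma poly_bound_Rpower N D r m : (1 <= r)%nat -> (m <= N * S r ^ D)%nat ->
  INR m <= (INR (N * 2 ^ D) + 1) * Rpower (INR r) (INR (S D)).
Proof.
  intros Hr Hm.
  assert (Hnat : (m <= N * 2 ^ D * r ^ S D)%nat).
  { assert ((S r ^ D <= 2 ^ D * r ^ D)%nat).
    { rewrite <- Nat.pow_mul_l. apply Nat.pow_le_mono_l. lia. }
    assert ((r ^ D <= r ^ S D)%nat) by (rewrite Nat.pow_succ_r'; nia).
    eapply Nat.le_trans; [exact Hm|]. rewrite <- Nat.mul_assoc. apply Nat.mul_le_mono_l.
    eapply Nat.le_trans; [eassumption | apply Nat.mul_le_mono_l; assumption]. }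
  apply le_INR in Hnat. rewrite mult_INR, pow_INR in Hnat.
  rewrite Rpower_pow by (apply lt_0_INR; lia).
  assert (0 <= INR r ^ S D) by (apply pow_le, pos_INR).
  nra.
Qed.

Theorem mainTheorem3 (G : Grp) (A : list (G -> G)) :
  finitely_generated G -> virtually_nilpotent G ->
  finite_aut_subgroup G A ->
  forall z y : G -> Prop, is_X G A z -> is_X G A y ->
  exists C k : R, 0 < C /\ 0 < k /\
    forall (r : nat) (m : nat), (1 <= r)%nat ->
      setcard (Tpow G A z r y) m -> INR m <= C * Rpower (INR r) k.
Proof.
  intros _ Hvn HA z y [z0 ->] [y0 ->].
  destruct (virtually_nilpotent_poly_growth G Hvn (map (fun a => a z0) A)) as (C & D & HB).
  exists (INR (length A * C * 2 ^ D) + 1), (INR (S D)). split; [|split].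
  - pose proof (pos_INR (length A * C * 2 ^ D)). lra.
  - apply lt_0_INR. lia.
  - intros r m Hr (L & HL & HLT & <-).
    destruct (HB r) as (B & HBlen & HBcov).
    assert (Hincl : incl L (flat_map (fun c => map (fun x => orbit G A (gmul G (c y0) x)) B) A)).
    { intros W HW. apply HLT in HW.
      destruct (Tpow_orbit_words G A z0 y0 HA r W HW) as (c & w & Hc & Hw & Hl & ->).
      apply in_flat_map. exists c. split; auto.
      apply in_map_iff. exists (gprod G w). split; auto. apply HBcov; auto. lia. }
    apply NoDup_incl_length in Hincl; auto.
    rewrite (flat_map_constant_length (c := length B)) in Hincl by (intros; apply length_map).
    apply poly_bound_Rpower; auto. rewrite <- Nat.mul_assoc.
    eapply Nat.le_trans; [exact Hincl | apply Nat.mul_le_mono_l, HBlen].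
Qed.
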